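(* Let $\Gamma$ be a Cayley graph on $n$ vertices, and let $s$ be the order of the stabilizer in $\operatorname{Aut}(\Gamma)$ of a vertex. Then $\Gamma$ is $k$-uniformly vertex-transitive for every integer $k$ with $1\le k\le s$.
   Context: A Cayley graph $C(G,S)$, for a finite group $G$ and subset $S\subset G$, has vertex set $G$, with $a,b$ adjacent iff $a=sb$ or $b=sa$ for some $s\in S$; a graph is Cayley if isomorphic to some $C(G,S)$. A permutation $\sigma$ of $V(\Gamma)$ is identified with its permutation matrix (the $(u,v)$ entry is $1$ iff $\sigma(u)=v$); $J_n$ is the $n\times n$ all-ones matrix. For $k\ge1$, $\Gamma$ is $k$-uniformly vertex-transitive if there is a set of $kn$ distinct automorphisms $\{\sigma_1,\ldots,\sigma_{kn}\}\subset\operatorname{Aut}(\Gamma)$ with $\sum_i\sigma_i=kJ_n$. *)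

From HB Require Import structures.
From mathcomp Require Import all_boot all_order all_fingroup.
Set Implicit Arguments. Unset Strict Implicit. Unset Printing Implicit Defensive.

Definition is_aut (V : finType) (e : rel V) (s : {perm V}) : bool :=
  [forall x, forall y, e x y == e (s x) (s y)].

(* adjacency of the Cayley graph C(G,S) on vertex set G (= all of gT):
   a ~ b iff a = s b or b = s a for some s in S *)
Definition cayley_rel (gT : finGroupType) (S : {set gT}) : rel gT :=
  fun a b => [exists s in S, (a == s * b)%g || (b == s * a)%g].

Definition is_cayley (V : finType) (e : rel V) : Prop :=
  exists (gT : finGroupType) (S : {set gT}) (f : V -> gT),
    bijective f /\ forall x y, e x y = cayley_rel S (f x) (f y).

(* entry (u,w) of the permutation matrix of s *)
Definition perm_entry (V : finType) (s : {perm V}) (u w : V) : nat :=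
  (s u == w).

(* k-uniformly vertex-transitive: a set A of k*n distinct automorphisms whose
   permutation matrices sum to k J_n (entrywise). *)
Definition k_unif_vt (V : finType) (e : rel V) (k : nat) : Prop :=
  exists A : {set {perm V}},
    [/\ #|A| = k * #|V|,
        (forall s, s \in A -> is_aut e s) &
        forall u w, \sum_(s in A) perm_entry s u w = k].

Definition stab_order (V : finType) (e : rel V) (v : V) : nat :=
  #|[set s : {perm V} | is_aut e s && (s v == v)]|.

From HB Require Import structures.
From mathcomp Require Import all_boot all_order all_fingroup.

Set Implicit Arguments. Unset Strict Implicit. Unset Printing Implicit Defensive.

(* A Cayley graph has a sharply transitive group R of automorphisms, its right
   translations. Given k automorphisms K fixing a vertex v, the k n products
   h r (h in K, r in R) are distinct automorphisms, since evaluating h r at v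
   recovers r. For fixed u, w and h there is exactly one r in R sending h u to
   w, so the permutation matrices of these products sum to k J_n. *)

Definition sharply_transitive (V : finType) (R : {set {perm V}}) : Prop :=
  forall u w, #|[set r in R | r u == w]| = 1.

Lemma is_autM (V : finType) (e : rel V) (s t : {perm V}) :
  is_aut e s -> is_aut e t -> is_aut e (s * t)%g.
Proof.
move=> /forallP Hs /forallP Ht; apply/forallP=> x; apply/forallP=> y.
rewrite !permM; move/forallP: (Hs x) => /(_ y)/eqP ->.
by move/forallP: (Ht (s x)) => /(_ (s y)).
Qed.

Lemma cayley_rel_mulr (gT : finGroupType) (S : {set gT}) (a b g : gT) :
  cayley_rel S (a * g)%g (b * g)%g = cayley_rel S a b.
Proof.
rewrite /cayley_rel; apply: eq_existsb => s.
by rewrite !mulgA !(inj_eq (mulIg g)).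
Qed.

Lemma subset_of_card (T : finType) (A : {set T}) k :
  k <= #|A| -> exists2 K : {set T}, K \subset A & #|K| = k.
Proof.
move=> le_kA; exists [set x in take k (enum A)].
  by apply/subsetP => x; rewrite inE => /mem_take; rewrite mem_enum.
rewrite cardsE (card_uniqP _) ?take_uniq ?enum_uniq // size_take -cardE.
by case: ltnP => // le_Ak; apply/eqP; rewrite eqn_leq le_Ak le_kA.
Qed.

Section SharplyTransitive.

Variables (V : finType) (R : {set {perm V}}).
Hypothesis R_st : sharply_transitive R.

Lemma sum_perm_entry_sharply_transitive u w :
  \sum_(r in R) perm_entry r u w = 1.
Proof.
rewrite -(R_st u w) -sum1dep_card big_mkcondr.
by apply: eq_bigr => r _; rewrite /perm_entry; case: eqP.
Qed.

Lemma card_sharply_transitive (v : V) : #|R| = #|V|.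
Proof.
have row_sum r : \sum_w perm_entry r v w = 1.
  rewrite (bigD1 (r v)) //= big1 ?addn0 /perm_entry ?eqxx // => w.
  by rewrite eq_sym => /negbTE ->.
rewrite -sum1_card -[#|V|]sum1_card.
rewrite (eq_bigr _ (fun r _ => esym (row_sum r))) exchange_big.
by apply: eq_bigr => w _; apply: sum_perm_entry_sharply_transitive.
Qed.

Lemma sharply_transitive_eval_inj (v : V) :
  {in R &, injective (fun r : {perm V} => r v)}.
Proof.
move=> r r' Rr Rr' /= rv; have /eqP/cards1P[r0 R0] := R_st v (r v).
have: r \in [set r0] by rewrite -R0 inE Rr eqxx.
have: r' \in [set r0] by rewrite -R0 inE Rr' rv eqxx.
by rewrite !inE => /eqP -> /eqP ->.
Qed.

Variables (K : {set {perm V}}) (v : V).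
Hypothesis K_fix : forall h, h \in K -> h v = v.

Let mulKR : {perm V} * {perm V} -> {perm V} := uncurry (fun h r => (h * r)%g).

Lemma mulKR_inj : {in setX K R &, injective mulKR}.
Proof.
move=> [h r] [h' r']; rewrite !inE /mulKR /= => /andP[Kh Rr] /andP[Kh' Rr'] E.
have r_eq : r = r'.
  apply: (sharply_transitive_eval_inj (v:=v)) => //=.
  have := congr1 (fun s : {perm V} => s v) E.
  by rewrite /= !permM (K_fix Kh) (K_fix Kh').
by rewrite -r_eq in E *; rewrite (mulIg _ _ _ E).
Qed.

Lemma sum_mulKR (F : {perm V} -> nat) :
  \sum_(s in [set (h * r)%g | h in K, r in R]) F s =
  \sum_(h in K) \sum_(r in R) F (h * r)%g.
Proof.
rewrite curry_imset2X big_imset /=; last exact: mulKR_inj.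
by rewrite pair_big_dep; apply: eq_big => -[h r]; rewrite ?inE.
Qed.

Lemma k_unif_vt_sharply_transitive (e : rel V) :
  (forall r, r \in R -> is_aut e r) -> (forall h, h \in K -> is_aut e h) ->
  k_unif_vt e #|K|.
Proof.
move=> autR autK; exists [set (h * r)%g | h in K, r in R]; split.
- rewrite curry_imset2X card_in_imset ?cardsX ?(card_sharply_transitive v) //.
  exact: mulKR_inj.
- by move=> _ /imset2P[h r Kh Rr ->]; apply: is_autM; [apply: autK|apply: autR].
- move=> u w; rewrite sum_mulKR -sum1_card; apply: eq_bigr => h _.
  rewrite -(sum_perm_entry_sharply_transitive (h u) w).
  by apply: eq_bigr => r _; rewrite /perm_entry permM.
Qed.

End SharplyTransitive.

Section RightTranslations.

Variables (V : finType) (gT : finGroupType) (f : V -> gT) (finv : gT -> V).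
Hypotheses (fK : cancel f finv) (finvK : cancel finv f).

Lemma transl_inj (g : gT) : injective (fun x => finv (f x * g)%g).
Proof. by move=> x y /(congr1 f); rewrite !finvK => /mulIg /(can_inj fK). Qed.

Definition transl (g : gT) : {perm V} := perm (@transl_inj g).

Lemma translE g x : transl g x = finv (f x * g)%g.
Proof. exact: permE. Qed.

Lemma transl_sharply_transitive : sharply_transitive [set transl g | g : gT].
Proof.
move=> u w; apply/eqP/cards1P; exists (transl ((f u)^-1 * f w)%g).
apply/setP => r; rewrite !inE; apply/andP/eqP => [[/imsetP[g _ ->]]|->].
  by rewrite translE => /eqP <-; rewrite finvK mulKg.
by rewrite imset_f // translE mulKVg fK.
Qed.

Lemma transl_aut (S : {set gT}) (e : rel V) g :
  (forall x y, e x y = cayley_rel S (f x) (f y)) -> is_aut e (transl g).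
Proof.
move=> eS; apply/forallP => x; apply/forallP => y.
by rewrite !translE !eS !finvK cayley_rel_mulr.
Qed.

End RightTranslations.

Theorem mainTheorem13 (V : finType) (e : rel V) (v : V) (k : nat) :
  is_cayley e -> 1 <= k <= stab_order e v -> k_unif_vt e k.
Proof.
move=> [gT [S [f [[finv fK finvK] eS]]]] /andP[_ le_k_stab].
have [K sK_stab <-] := subset_of_card le_k_stab.
have K_stab h : h \in K -> is_aut e h && (h v == v).
  by move/(subsetP sK_stab); rewrite inE.
apply: (@k_unif_vt_sharply_transitive _ _ (transl_sharply_transitive fK finvK) K v).
- by move=> h /K_stab /andP[_ /eqP].
- by move=> _ /imsetP[g _ ->]; apply: transl_aut eS.
- by move=> h /K_stab /andP[].
Qed.
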